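(* Let $\mathcal{H}$ be a finite-dimensional Hilbert space, $\tau$ a quantum channel on $\mathcal{H}$ (extended linearly to all operators on $\mathcal{H}$), and let $\Theta\neq0$ be an operator on $\mathcal{H}$ with $\tau(\Theta)=\lambda\Theta$ for some $\lambda$ with $|\lambda|=1$. Let $g=\mathrm{Tr}\sqrt{\Theta^{\dagger}\Theta}>0$. Then the density matrices $\rho=\sqrt{\Theta\Theta^{\dagger}}/g$ and $\sigma=\sqrt{\Theta^{\dagger}\Theta}/g$ are fixed points of $\tau$.
   Context: A quantum channel is a linear, completely positive, trace-preserving map on the space of linear operators on $\mathcal{H}$. *)

From HB Require Import structures.
From mathcomp Require Import all_boot all_order all_algebra all_field.
Set Implicit Arguments. Unset Strict Implicit. Unset Printing Implicit Defensive.
Import Order.TTheory GRing.Theory Num.Theory.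
Local Open Scope ring_scope.

(* Operators on the n-dimensional Hilbert space C^n are n x n complex matrices. *)

Definition adj {m p : nat} (A : 'M[algC]_(m, p)) : 'M[algC]_(p, m) :=
  (map_mx Num.conj A)^T.

(* Positive semidefinite: <x, A x> >= 0 for all vectors x (in algC, 0 <= z
   means z is real and nonnegative). *)
Definition psd {n : nat} (A : 'M[algC]_n) : Prop :=
  forall x : 'cV[algC]_n, 0 <= (adj x *m A *m x) 0 0.

(* An element of M_m(C) (x) M_n(C) ~= M_m(M_n(C)), given as an m x m block matrix
   of n x n blocks, is positive semidefinite. *)
Definition block_psd {n m : nat} (A : 'I_m -> 'I_m -> 'M[algC]_n) : Prop :=
  forall x : 'I_m -> 'cV[algC]_n,
    0 <= \sum_(i < m) \sum_(j < m) (adj (x i) *m A i j *m x j) 0 0.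

(* Complete positivity: id_m (x) T is positive for every m. *)
Definition completely_positive {n : nat} (T : 'M[algC]_n -> 'M[algC]_n) : Prop :=
  forall (m : nat) (A : 'I_m -> 'I_m -> 'M[algC]_n),
    block_psd A -> block_psd (fun i j => T (A i j)).

Definition trace_preserving {n : nat} (T : 'M[algC]_n -> 'M[algC]_n) : Prop :=
  forall A : 'M[algC]_n, \tr (T A) = \tr A.

Definition quantum_channel {n : nat} (T : {linear 'M[algC]_n -> 'M[algC]_n}) : Prop :=
  completely_positive T /\ trace_preserving T.

Definition is_psd_sqrt {n : nat} (B A : 'M[algC]_n) : Prop :=
  psd B /\ B *m B = A.

(* Factor Theta = Y1^* Y2 with Y1^* Y1 = P and tr (Y2^* Y2) = tr P, namely
   Y1 = P^(1/2) and Y2 = P^(-1/2) Theta (pseudo-inverse).  Complete positivity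
   makes the block matrix N of the tau (Yi^* Yj) positive, and its off-diagonal
   blocks are lambda Theta and conj(lambda) Theta^*.  Compressing N by
   [1; -conj(lambda) V^*], where V = P^(-1) Theta satisfies Theta V^* = P, gives
   the positive matrix tau P - 2 P + V tau (Y2^* Y2) V^*, whose trace is
   nonpositive by trace preservation, |lambda| = 1 and V^* V being a projection.
   So it vanishes, which forces tau P = P.  The same argument for Theta^*, an
   eigenvector of tau for conj(lambda), gives tau Q = Q. *)

From HB Require Import structures.
From mathcomp Require Import all_boot all_order all_algebra all_field.
From mathcomp Require Import ring spectral.
Import Order.TTheory GRing.Theory Num.Theory.
Local Open Scope ring_scope.
Set Implicit Arguments. Unset Strict Implicit. Unset Printing Implicit Defensive.

Lemma adjmxE m p (A : 'M[algC]_(m, p)) i j : adj A i j = (A j i)^*.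
Proof. by rewrite /adj !mxE. Qed.

Lemma adjmxK m p (A : 'M[algC]_(m, p)) : adj (adj A) = A.
Proof. by apply/matrixP=> i j; rewrite !adjmxE conjCK. Qed.

Lemma adjmxM m p q (A : 'M[algC]_(m, p)) (B : 'M[algC]_(p, q)) :
  adj (A *m B) = adj B *m adj A.
Proof. by rewrite /adj map_mxM trmx_mul. Qed.

Lemma adjmxD m p (A B : 'M[algC]_(m, p)) : adj (A + B) = adj A + adj B.
Proof. by rewrite /adj map_mxD linearD. Qed.

Lemma adjmxN m p (A : 'M[algC]_(m, p)) : adj (- A) = - adj A.
Proof. by rewrite /adj map_mxN linearN. Qed.

Lemma adjmxB m p (A B : 'M[algC]_(m, p)) : adj (A - B) = adj A - adj B.
Proof. by rewrite adjmxD adjmxN. Qed.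

Lemma adjmxZ m p a (A : 'M[algC]_(m, p)) : adj (a *: A) = a^* *: adj A.
Proof. by rewrite /adj map_mxZ linearZ. Qed.

Lemma adjmx0 m p : adj (0 : 'M[algC]_(m, p)) = 0.
Proof. by rewrite /adj map_mx0 trmx0. Qed.

Lemma adjmx1 n : adj (1%:M : 'M[algC]_n) = 1%:M.
Proof. by rewrite /adj map_mx1 trmx1. Qed.

Lemma adjmx_delta m p i j : adj (delta_mx i j : 'M[algC]_(m, p)) = delta_mx j i.
Proof. by rewrite /adj map_delta_mx trmx_delta. Qed.

Lemma adjmx_col m1 m2 p (A : 'M[algC]_(m1, p)) (B : 'M[algC]_(m2, p)) :
  adj (col_mx A B) = row_mx (adj A) (adj B).
Proof. by rewrite /adj map_col_mx tr_col_mx. Qed.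

Lemma adjmx_block m p (A : 'M[algC]_m) (B : 'M[algC]_(m, p)) (C : 'M[algC]_(p, m))
    (D : 'M[algC]_p) :
  adj (block_mx A B C D) = block_mx (adj A) (adj C) (adj B) (adj D).
Proof. by rewrite /adj map_block_mx tr_block_mx. Qed.

Lemma adjmx_diag n (d : 'rV[algC]_n) : adj (diag_mx d) = diag_mx (map_mx Num.conj d).
Proof. by rewrite /adj map_diag_mx tr_diag_mx. Qed.

Lemma adjmx_trmxC m p (A : 'M[algC]_(m, p)) : adj A = (A ^t* )%sesqui.
Proof. by apply/matrixP => i j; rewrite !mxE. Qed.

Lemma mulmx_cV_inj m n (A B : 'M[algC]_(m, n)) :
  (forall x : 'cV_n, A *m x = B *m x) -> A = B.
Proof.
move=> eqAx; apply: trmx_inj; apply/mul_rVP => u.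
by rewrite -[u]trmxK -!trmx_mul eqAx.
Qed.

Definition hform n (x : 'cV[algC]_n) (K : 'M[algC]_n) (y : 'cV[algC]_n) : algC :=
  (adj x *m K *m y) 0 0.

Section HermitianForm.
Variable n : nat.
Implicit Types (x y z : 'cV[algC]_n) (K L M : 'M[algC]_n) (a : algC).

Lemma hform_conj x K y : (hform x K y)^* = hform y (adj K) x.
Proof. by rewrite /hform -adjmxE !adjmxM adjmxK mulmxA. Qed.

Lemma hformDl x y K z : hform (x + y) K z = hform x K z + hform y K z.
Proof. by rewrite /hform adjmxD !mulmxDl mxE. Qed.

Lemma hformDr x K y z : hform x K (y + z) = hform x K y + hform x K z.
Proof. by rewrite /hform !mulmxDr mxE. Qed.

Lemma hformDm x K L y : hform x (K + L) y = hform x K y + hform x L y.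
Proof. by rewrite /hform mulmxDr mulmxDl mxE. Qed.

Lemma hformNm x K y : hform x (- K) y = - hform x K y.
Proof. by rewrite /hform mulmxN mulNmx mxE. Qed.

Lemma hformBm x K L y : hform x (K - L) y = hform x K y - hform x L y.
Proof. by rewrite hformDm hformNm. Qed.

Lemma hformZl a x K y : hform (a *: x) K y = a^* * hform x K y.
Proof. by rewrite /hform adjmxZ -!scalemxAl mxE. Qed.

Lemma hformZr a x K y : hform x K (a *: y) = a * hform x K y.
Proof. by rewrite /hform -!scalemxAr mxE. Qed.

Lemma hform_mulmxr x K M y : hform x K (M *m y) = hform x (K *m M) y.
Proof. by rewrite /hform !mulmxA. Qed.

Lemma hform_mulmxl x K M y : hform (M *m x) K y = hform x (adj M *m K) y.
Proof. by rewrite /hform adjmxM !mulmxA. Qed.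

Lemma hform_deltal i K y : hform (delta_mx i 0) K y = (K *m y) i 0.
Proof. by rewrite /hform adjmx_delta -mulmxA -rowE mxE. Qed.

Lemma hform_delta i j K : hform (delta_mx i 0) K (delta_mx j 0) = K i j.
Proof. by rewrite hform_deltal -colE mxE. Qed.

Lemma adjmx_mul_cVE x y : (adj x *m y) 0 0 = \sum_i (x i 0)^* * y i 0.
Proof. by rewrite mxE; apply: eq_bigr => i _; rewrite adjmxE. Qed.

Lemma adjmx_mul_cV_ge0 x : 0 <= (adj x *m x) 0 0.
Proof. by rewrite adjmx_mul_cVE sumr_ge0 // => i _; rewrite mulrC mul_conjC_ge0. Qed.

Lemma adjmx_mul_cV_eq0 x : (adj x *m x) 0 0 = 0 -> x = 0.
Proof.
rewrite adjmx_mul_cVE => /psumr_eq0P x0; apply/colP => i; rewrite mxE.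
apply/eqP; rewrite -mul_conjC_eq0 mulrC x0 // => j _.
by rewrite mulrC mul_conjC_ge0.
Qed.

(* Polarization at e_i + e_j and e_i + 'i e_j. *)
Lemma hform_eq0 K : (forall x, hform x K x = 0) -> K = 0.
Proof.
move=> K0; apply/matrixP => i j; rewrite mxE.
have Kii := K0 (delta_mx i 0); have Kjj := K0 (delta_mx j 0).
have Kij := K0 (delta_mx i 0 + delta_mx j 0).
have Kij' := K0 (delta_mx i 0 + 'i *: delta_mx j 0).
rewrite !hform_delta in Kii Kjj.
rewrite !(hformDl, hformDr, hformZl, hformZr, hform_delta, Kii, Kjj) conjCi in Kij Kij'.
have Kji : K j i = - K i j.
  by apply/eqP; rewrite -addr_eq0 addrC; apply/eqP; rewrite -[RHS]Kij; ring.
have : 'i *+ 2 * K i j = 0 by rewrite -[RHS]Kij' Kji; ring.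
by move/eqP; rewrite mulf_eq0 mulrn_eq0 /= (negbTE (neq0Ci _)) => /eqP.
Qed.

End HermitianForm.

Section Psd.
Variable n : nat.
Implicit Types (x y z w : 'cV[algC]_n) (K B : 'M[algC]_n).

Lemma psd_adj K : psd K -> adj K = K.
Proof.
move=> psdK; apply/eqP; rewrite -subr_eq0; apply/eqP; apply: hform_eq0 => x.
by rewrite hformBm -hform_conj geC0_conj ?subrr //; apply: psdK.
Qed.

Lemma psd_hform_eq0 K z w : psd K -> hform z K z = 0 -> hform w K z = 0.
Proof.
move=> psdK Kz0; set a := hform w K z; set c := hform w K w.
have c_ge0 : 0 <= c by apply: psdK.
have Kzw : hform z K w = a^* by rewrite /a hform_conj psd_adj.
(* Testing x = z - s a w with s = 1/(c+1) forces -s^2 |a|^2 (c+2) >= 0. *)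
pose s := (c + 1)^-1.
have s_gt0 : 0 < s by rewrite invr_gt0 ltr_wpDl.
have sc : s^* = s by rewrite geC0_conj // ltW.
pose t := - (s * a).
have tc : t^* = - (s * a^*).
  by rewrite rmorphN rmorphM; congr (- (_ * _)).
have := psdK (z + t *: w).
rewrite -/(hform _ _ _) !(hformDl, hformDr, hformZl, hformZr) Kz0 Kzw -/a -/c tc.
have -> : 0 + t * a^* + (- (s * a^*) * a + - (s * a^*) * (t * c))
          = - (s ^+ 2 * `|a| ^+ 2 * (c + 2)).
  rewrite normCK; apply/eqP; rewrite -subr_eq0; apply/eqP.
  transitivity ((s *+ 2) * (a * a^*) * (s * (c + 1) - 1)); first by rewrite /t; ring.
  by rewrite mulVf ?subrr ?mulr0 // gt_eqF // ltr_wpDl.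
rewrite oppr_ge0 pmulr_lle0 ?ltr_wpDl ?ltr0n // pmulr_rle0 ?exprn_gt0 //.
move=> a2_le0; apply/eqP.
by rewrite -normr_eq0 -sqrf_eq0 eq_le a2_le0 exprn_ge0.
Qed.

Lemma psd_kernel K z : psd K -> hform z K z = 0 -> K *m z = 0.
Proof.
move=> psdK Kz0; apply/colP => i; rewrite [RHS]mxE -hform_deltal.
exact: psd_hform_eq0.
Qed.

Lemma psd_trace_ge0 K : psd K -> 0 <= \tr K.
Proof. by move=> psdK; apply: sumr_ge0 => i _; rewrite -hform_delta; apply: psdK. Qed.

Lemma psd_trace_eq0 K : psd K -> \tr K = 0 -> K = 0.
Proof.
move=> psdK /psumr_eq0P Kii0.
have Kdelta0 j : K *m (delta_mx j 0 : 'cV_n) = 0.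
  apply: psd_kernel; rewrite // hform_delta Kii0 // => i _.
  by rewrite -hform_delta; apply: psdK.
by apply/matrixP => i j; rewrite -[K i j]hform_delta hform_deltal Kdelta0 !mxE.
Qed.

End Psd.

Lemma psd_congr m n (K : 'M[algC]_m) (W : 'M[algC]_(m, n)) :
  psd K -> psd (adj W *m K *m W).
Proof. by move=> psdK x; rewrite !mulmxA -adjmxM -mulmxA; apply: psdK. Qed.

Lemma psd_congr_eq0 m n (K : 'M[algC]_m) (W : 'M[algC]_(m, n)) :
  psd K -> adj W *m K *m W = 0 -> K *m W = 0.
Proof.
move=> psdK WKW0; apply: mulmx_cV_inj => x; rewrite mul0mx -mulmxA.
apply: psd_kernel => //.
have : (adj x *m (adj W *m K *m W) *m x) 0 0 = 0.
  by rewrite WKW0 mulmx0 mul0mx mxE.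
by rewrite /hform adjmxM !mulmxA.
Qed.

Lemma gram_eq0 m n (X : 'M[algC]_(m, n)) : adj X *m X = 0 -> X = 0.
Proof.
move=> XX0; apply: mulmx_cV_inj => x; rewrite mul0mx; apply: adjmx_mul_cV_eq0.
by rewrite adjmxM -mulmxA (mulmxA (adj X)) XX0 mul0mx mulmx0 mxE.
Qed.

Lemma psd_trace_mul_proj n (B E : 'M[algC]_n) :
  psd B -> adj E = E -> E *m E = E -> \tr (E *m B) <= \tr B.
Proof.
move=> psdB adjE EE; pose F := 1%:M - E.
have adjF : adj F = F by rewrite adjmxB adjmx1 adjE.
have FF : F *m F = F by rewrite mulmxBl !mulmxBr !mul1mx mulmx1 EE subrr subr0.
have : 0 <= \tr (adj F *m B *m F) by apply/psd_trace_ge0/psd_congr.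
by rewrite adjF mxtrace_mulC mulmxA FF mulmxBl mul1mx linearB subr_ge0.
Qed.

Lemma gram_block_psd n m (Y : 'I_m -> 'M[algC]_n) :
  block_psd (fun i j => adj (Y i) *m Y j).
Proof.
move=> x; pose v := \sum_(j < m) Y j *m x j.
suff -> : \sum_(i < m) \sum_(j < m) (adj (x i) *m (adj (Y i) *m Y j) *m x j) 0 0
        = (adj v *m v) 0 0 by apply: adjmx_mul_cV_ge0.
rewrite /v adjmx_mul_cVE.
under eq_bigr => i _ do under eq_bigr => j _ do
  rewrite !mulmxA -adjmxM -mulmxA adjmx_mul_cVE.
under [RHS]eq_bigr => l _ do rewrite !summxE rmorph_sum mulr_suml.
under [RHS]eq_bigr => l _ do under eq_bigr => i _ do rewrite mulr_sumr.
by rewrite [RHS]exchange_big; apply: eq_bigr => i _; rewrite exchange_big.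
Qed.

Lemma hform_col_block n (x1 x2 y1 y2 : 'cV[algC]_n) (A B C D : 'M[algC]_n) :
  hform (col_mx x1 x2) (block_mx A B C D) (col_mx y1 y2) =
  hform x1 A y1 + hform x1 B y2 + hform x2 C y1 + hform x2 D y2.
Proof.
rewrite /hform adjmx_col mul_row_block mul_row_col !mulmxDl !mxE.
by rewrite !addrA; congr (_ + _); rewrite -!addrA; congr (_ + _); rewrite addrC.
Qed.

Lemma cp_gram2 n (tau : 'M[algC]_n -> 'M[algC]_n) (Y1 Y2 : 'M[algC]_n) :
  completely_positive tau ->
  psd (block_mx (tau (adj Y1 *m Y1)) (tau (adj Y1 *m Y2))
                (tau (adj Y2 *m Y1)) (tau (adj Y2 *m Y2))).
Proof.
move=> cp_tau z; rewrite -(vsubmxK z) -/(hform _ _ _) hform_col_block.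
pose Y (i : 'I_2) := if i == 0 then Y1 else Y2.
pose x (i : 'I_2) := if i == 0 then usubmx z else dsubmx z.
have := cp_tau 2 _ (gram_block_psd Y) x.
by rewrite !big_ord_recl !big_ord0 /= !addr0 !addrA.
Qed.

Lemma cp_adj n (tau : 'M[algC]_n -> 'M[algC]_n) (A : 'M[algC]_n) :
  completely_positive tau -> tau (adj A) = adj (tau A).
Proof.
move=> /(cp_gram2 1%:M A)/psd_adj; rewrite adjmx_block adjmx1 !mul1mx mulmx1.
by case/eq_block_mx => _ _ <-.
Qed.

Lemma psd_block_dr m n (A : 'M[algC]_m) (B : 'M[algC]_(m, n)) (C : 'M[algC]_(n, m))
    (D : 'M[algC]_n) :
  psd (block_mx A B C D) -> psd D.
Proof.
move/(psd_congr (col_mx 0 1%:M)).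
rewrite adjmx_col adjmx1 adjmx0 mul_row_block mul_row_col.
by rewrite !mul0mx !mul1mx !add0r mulmx0 mulmx1 add0r.
Qed.

Lemma cp_peripheral_gram_fixed n (tau : 'M[algC]_n -> 'M[algC]_n)
    (Th P Y1 Y2 V : 'M[algC]_n) (l : algC) :
  completely_positive tau -> trace_preserving tau ->
  tau Th = l *: Th -> `|l| = 1 ->
  adj Y1 *m Y1 = P -> adj Y1 *m Y2 = Th -> \tr (adj Y2 *m Y2) = \tr P ->
  Th *m adj V = P -> adj V *m V *m (adj V *m V) = adj V *m V ->
  tau P = P.
Proof.
move=> cp_tau tp_tau tauTh l1 Y11 Y12 trY22 ThV VV.
have ll : l * l^* = 1 by rewrite -normCK l1 expr1n.
have adjP : adj P = P by rewrite -Y11 adjmxM adjmxK.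
have VTh : V *m adj Th = P by rewrite -[V]adjmxK -adjmxM ThV adjP.
have tauTh' : tau (adj Th) = l^* *: adj Th by rewrite cp_adj // tauTh adjmxZ.
have psdN := cp_gram2 Y1 Y2 cp_tau.
rewrite Y11 Y12 -[adj Y2 *m Y1]adjmxK adjmxM adjmxK Y12 tauTh tauTh' in psdN.
set A := tau P in psdN *; set B := tau (adj Y2 *m Y2) in psdN *.
set N := block_mx A _ _ B in psdN.
pose M := - l^* *: adj V; pose W := col_mx 1%:M M.
have adjM : adj M = - l *: V.
  by rewrite adjmxZ adjmxK rmorphN /= conjCK.
have ThM : l *: Th *m M = - P.
  by rewrite -scalemxAr -scalemxAl scalerA mulNr [l^* * l]mulrC ll scaleN1r ThV.
have MTh : adj M *m (l^* *: adj Th) = - P.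
  by rewrite adjM -scalemxAr -scalemxAl scalerA mulrN [l^* * l]mulrC ll scaleN1r VTh.
have MM : M *m adj M = adj V *m V.
  by rewrite adjM -scalemxAr -scalemxAl scalerA mulrNN ll scale1r.
have NW : N *m W = col_mx (A - P) (l^* *: adj Th + B *m M).
  by rewrite mul_block_col !mulmx1 ThM.
have trWNW : \tr (adj W *m N *m W) = \tr (adj V *m V *m B) - \tr B.
  rewrite -mulmxA NW adjmx_col adjmx1 mul_row_col mul1mx mulmxDr MTh.
  rewrite !linearD /= !linearN /= [in \tr A]tp_tau [in \tr B]tp_tau trY22.
  by rewrite [\tr (adj M *m _)]mxtrace_mulC -[B *m M *m _]mulmxA MM mxtrace_mulC; ring.
have WNW0 : adj W *m N *m W = 0.
  apply: psd_trace_eq0; first exact: psd_congr.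
  apply/le_anti; rewrite psd_trace_ge0 ?andbT; last exact: psd_congr.
  rewrite trWNW subr_le0 psd_trace_mul_proj ?adjmxM ?adjmxK //.
  exact: psd_block_dr psdN.
have /(congr1 usubmx) := psd_congr_eq0 psdN WNW0.
by rewrite NW col_mxKu linear0 => /eqP; rewrite subr_eq0 => /eqP.
Qed.

Lemma hermitian_unitary_diag n (P : 'M[algC]_n) : adj P = P ->
  exists (W : 'M[algC]_n) (d : 'rV[algC]_n),
    [/\ adj W *m W = 1%:M, W *m adj W = 1%:M & P = W *m diag_mx d *m adj W].
Proof.
move=> adjP; have /orthomx_spectralP eP : P \is normalmx.
  by apply/normalmxP; rewrite -adjmx_trmxC adjP.
have /unitarymxP U1 := spectral_unitarymx P; rewrite -adjmx_trmxC in U1.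
exists (adj (spectralmx P)), (spectral_diag P); rewrite adjmxK; split => //.
  exact: mulmx1C.
by rewrite [LHS]eP invmx_unitary ?spectral_unitarymx // adjmx_trmxC.
Qed.

Section UnitaryCalculus.
Variables (n : nat) (W : 'M[algC]_n).
Hypotheses (WW : adj W *m W = 1%:M) (WW' : W *m adj W = 1%:M).
Implicit Types f g : 'I_n -> algC.

Fact fcalc_key : unit. Proof. by []. Qed.
Definition fcalc f := locked_with fcalc_key (W *m diag_mx (\row_k f k) *m adj W).

Lemma fcalcE f : fcalc f = W *m diag_mx (\row_k f k) *m adj W.
Proof. by rewrite /fcalc unlock. Qed.

Lemma eq_fcalc f g : f =1 g -> fcalc f = fcalc g.
Proof.
move=> eq_fg; rewrite !fcalcE; congr (_ *m diag_mx _ *m _).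
by apply/rowP => k; rewrite !mxE.
Qed.

Lemma fcalcM f g : fcalc f *m fcalc g = fcalc (fun k => f k * g k).
Proof.
rewrite !fcalcE -!mulmxA (mulmxA (adj W)) WW mul1mx !mulmxA -(mulmxA W).
congr (_ *m _); congr (_ *m _); apply/matrixP => i j.
by rewrite mul_diag_mx !mxE mulrnAr.
Qed.

Lemma fcalcB f g : fcalc f - fcalc g = fcalc (fun k => f k - g k).
Proof.
rewrite !fcalcE -mulmxBl -mulmxBr; congr (_ *m _ *m _).
by apply/matrixP => i j; rewrite !mxE mulrnBl.
Qed.

Lemma fcalc_const c : fcalc (fun=> c) = c%:M.
Proof.
rewrite !fcalcE (_ : diag_mx _ = c%:M).
  by rewrite mul_mx_scalar -scalemxAl WW' scalemx1.
by apply/matrixP => i j; rewrite !mxE.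
Qed.

Lemma fcalc_adj f : adj (fcalc f) = fcalc (fun k => (f k)^*).
Proof.
rewrite !fcalcE !adjmxM adjmxK adjmx_diag mulmxA; congr (_ *m diag_mx _ *m _).
by apply/rowP => k; rewrite !mxE.
Qed.

Lemma fcalc_adj_ge0 f : (forall k, 0 <= f k) -> adj (fcalc f) = fcalc f.
Proof. by move=> f_ge0; rewrite fcalc_adj; apply: eq_fcalc => k; rewrite geC0_conj. Qed.

Lemma fcalc_trace f : \tr (fcalc f) = \sum_k f k.
Proof.
rewrite !fcalcE mxtrace_mulC mulmxA WW mul1mx mxtrace_diag.
by apply: eq_bigr => k _; rewrite mxE.
Qed.

(* Z = (1 - g)(D) X has Gram matrix Z Z^* = ((1 - g) f (1 - g)^* )(D) = 0. *)
Lemma fcalc_mulmx_id f g p (X : 'M[algC]_(n, p)) :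
  X *m adj X = fcalc f -> (forall k, g k * f k = f k) -> fcalc g *m X = X.
Proof.
move=> XX gf; pose Z := fcalc (fun k => 1 - g k) *m X.
have eZ : Z = X - fcalc g *m X.
  by rewrite /Z -fcalcB fcalc_const mulmxBl mul_scalar_mx scale1r.
have ZZ : Z *m adj Z = 0.
  rewrite /Z adjmxM fcalc_adj mulmxA -(mulmxA _ X) XX !fcalcM.
  have -> : 0 = fcalc (fun=> 0) :> 'M_n by rewrite fcalc_const -scalemx1 scale0r.
  apply: eq_fcalc => k.
  by rewrite mulrBl gf mul1r subrr mul0r.
have adjZ0 : adj Z = 0 by apply: gram_eq0; rewrite adjmxK.
have : Z = 0 by rewrite -[Z]adjmxK adjZ0 adjmx0.
by rewrite eZ => /eqP; rewrite subr_eq0 => /eqP.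
Qed.
End UnitaryCalculus.

Lemma mulfVK_id (F : fieldType) (x : F) : x * x^-1 * x = x.
Proof. by have [->|x0] := eqVneq x 0; rewrite ?mulr0 // mulfV ?mul1r. Qed.

Lemma mulVfK_inv (F : fieldType) (x : F) : x^-1 * x * x^-1 = x^-1.
Proof. by rewrite -{2}[x]invrK mulfVK_id. Qed.

Lemma psd_sqrt_gram_factor n (Th P : 'M[algC]_n) :
  psd P -> P *m P = Th *m adj Th ->
  exists Y1 Y2 V : 'M[algC]_n,
    [/\ adj Y1 *m Y1 = P, adj Y1 *m Y2 = Th, \tr (adj Y2 *m Y2) = \tr P,
        Th *m adj V = P & adj V *m V *m (adj V *m V) = adj V *m V].
Proof.
move=> psdP PP; have [W [d [WW WW' eP]]] := hermitian_unitary_diag (psd_adj psdP).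
have d_ge0 k : 0 <= d 0 k.
  have := psdP (W *m delta_mx k 0); rewrite -/(hform _ _ _) hform_mulmxl hform_mulmxr.
  by rewrite eP !mulmxA WW mul1mx -mulmxA WW mulmx1 hform_delta mxE eqxx mulr1n.
(* t is the pseudo-inverse of s, since 0^-1 = 0. *)
pose s k := sqrtC (d 0 k); pose t k := (s k)^-1.
have s_ge0 k : 0 <= s k by rewrite sqrtC_ge0.
have t_ge0 k : 0 <= t k by rewrite invr_ge0.
have t2_ge0 k : 0 <= t k ^+ 2 by rewrite exprn_ge0.
have eP' : P = fcalc W (fun k => s k ^+ 2).
  rewrite eP fcalcE; congr (_ *m diag_mx _ *m _).
  by apply/rowP => k; rewrite mxE sqrtCK.
have ThTh : Th *m adj Th = fcalc W (fun k => s k ^+ 4).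
  by rewrite -PP eP' fcalcM //; apply: eq_fcalc => k; rewrite -exprD.
have ETh : fcalc W (fun k => s k * t k) *m Th = Th.
  apply: (fcalc_mulmx_id WW WW' ThTh) => k.
  by rewrite [s k ^+ 4]exprS mulrA /t mulfVK_id -exprS.
pose R := fcalc W (fun k => t k ^+ 2).
have RR : R *m R *m (Th *m adj Th) *m (R *m R) = R *m R.
  rewrite ThTh !fcalcM //; apply: eq_fcalc => k.
  by transitivity ((t k * s k * t k) ^+ 4); [ring | rewrite /t mulVfK_inv; ring].
exists (fcalc W s), (fcalc W t *m Th), (R *m Th).
rewrite ![adj (_ *m Th)]adjmxM !fcalc_adj_ge0 //; split.
- by rewrite fcalcM // eP'; apply: eq_fcalc => k; rewrite expr2.
- by rewrite mulmxA fcalcM.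
- rewrite mxtrace_mulC !mulmxA -(mulmxA _ Th) ThTh !fcalcM // eP' !fcalc_trace //.
  apply: eq_bigr => k _.
  by transitivity ((s k * t k * s k) ^+ 2); [ring | rewrite /t mulfVK_id].
- rewrite mulmxA ThTh fcalcM // eP'; apply: eq_fcalc => k.
  by transitivity ((s k * t k * s k) ^+ 2); [ring | rewrite /t mulfVK_id].
- transitivity (adj Th *m (R *m R *m (Th *m adj Th) *m (R *m R)) *m Th).
    by rewrite !mulmxA.
  by rewrite RR !mulmxA.
Qed.

Unset Implicit Arguments.

Theorem mainTheorem13 (n : nat) (tau : {linear 'M[algC]_n -> 'M[algC]_n})
  (Theta : 'M[algC]_n) (lambda : algC) (P Q : 'M[algC]_n) :
  quantum_channel tau ->
  Theta != 0 ->
  tau Theta = lambda *: Theta ->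
  `|lambda| = 1 ->
  is_psd_sqrt P (Theta *m adj Theta) ->
  is_psd_sqrt Q (adj Theta *m Theta) ->
  let g := \tr Q in
  0 < g /\
  tau (g^-1 *: P) = g^-1 *: P /\
  tau (g^-1 *: Q) = g^-1 *: Q.
Proof.
move=> [cp_tau tp_tau] Theta_neq0 tauTheta l1 [psdP PP] [psdQ QQ] g.
have [Y1 [Y2 [V [Y11 Y12 trY22 ThV VV]]]] := psd_sqrt_gram_factor psdP PP.
have tauP := cp_peripheral_gram_fixed cp_tau tp_tau tauTheta l1 Y11 Y12 trY22 ThV VV.
have tauTheta' : tau (adj Theta) = lambda^* *: adj Theta.
  by rewrite cp_adj // tauTheta adjmxZ.
have l1' : `|lambda^*| = 1 by rewrite norm_conjC.
have QQ' : Q *m Q = adj Theta *m adj (adj Theta) by rewrite adjmxK.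
have [Z1 [Z2 [U [Z11 Z12 trZ22 ThU UU]]]] := psd_sqrt_gram_factor psdQ QQ'.
have tauQ := cp_peripheral_gram_fixed cp_tau tp_tau tauTheta' l1' Z11 Z12 trZ22 ThU UU.
split; last by rewrite !linearZ /= tauP tauQ.
rewrite lt_def psd_trace_ge0 // andbT; apply: contra Theta_neq0 => /eqP.
by move/(psd_trace_eq0 psdQ) => Q0; apply/eqP/gram_eq0; rewrite -QQ Q0 mul0mx.
Qed.
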